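(* Let $q>1$, let $\mathbb{X}$ be a Banach space, let $f:\overline{q^{\mathbb{Z}}}\times\mathbb{X}\to\mathbb{X}$ be almost automorphic in $t$ for each $x\in\mathbb{X}$, and suppose $f$ is Lipschitz in $x$ uniformly in $t$, i.e. there is $L>0$ with $\|f(t,x)-f(t,y)\|\le L\|x-y\|$ for all $x,y\in\mathbb{X}$, $t\in\overline{q^{\mathbb{Z}}}$. Let $\varphi:\overline{q^{\mathbb{Z}}}\to\mathbb{X}$ be almost automorphic. Then $F:\overline{q^{\mathbb{Z}}}\to\mathbb{X}$, $F(t)=f(t,\varphi(t))$, is almost automorphic.
   Context: $\overline{q^{\mathbb{Z}}}=\{q^n:n\in\mathbb{Z}\}\cup\{0\}$ with $q>1$; a function on it is continuous iff $\lim_{n\to-\infty}f(q^n)=f(0)$. Definition 1: a continuous function $h:\overline{q^{\mathbb{Z}}}\to\mathbb{X}$ is almost automorphic if for every sequence of integers $(s_n')$ there exists a subsequence $(s_n)$ such that $k(t):=\lim_{n\to\infty}h(tq^{s_n})$ exists for each $t\in\overline{q^{\mathbb{Z}}}$ and $\lim_{n\to\infty}k(tq^{-s_n})=h(t)$ for each $t$. Definition 2: a continuous function $f:\overline{q^{\mathbb{Z}}}\times\mathbb{X}\to\mathbb{X}$ is almost automorphic in $t$ for each $x\in\mathbb{X}$ if for every sequence of integers $(s_n')$ there exists a subsequence $(s_n)$ such that $g(t,x):=\lim_{n\to\infty}f(tq^{s_n},x)$ exists for each $t\in\overline{q^{\mathbb{Z}}}$, $x\in\mathbb{X}$, and $\lim_{n\to\infty}g(tq^{-s_n},x)=f(t,x)$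 for each $t\in\overline{q^{\mathbb{Z}}}$, $x\in\mathbb{X}$. *)

From HB Require Import structures.
From mathcomp Require Import all_boot all_order all_algebra.
From mathcomp Require Import all_classical all_reals all_analysis.
Set Implicit Arguments. Unset Strict Implicit. Unset Printing Implicit Defensive.
Import Order.TTheory GRing.Theory Num.Theory.
Import numFieldNormedType.Exports.
Local Open Scope classical_set_scope.
Local Open Scope ring_scope.

Definition qZbar {R : realType} (q : R) : set R :=
  [set t | t = 0 \/ exists n : int, t = q ^ n].

Definition subseq_of (s s' : nat -> int) : Prop :=
  exists phi : nat -> nat,
    {homo phi : m n / (m < n)%N >-> (m < n)%N} /\ forall n, s n = s' (phi n).

Definition almost_automorphic {R : realType} {X : normedModType R}
  (q : R) (h : R -> X) : Prop :=
  {within qZbar q, continuous h} /\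
  forall s' : nat -> int, exists s : nat -> int, subseq_of s s' /\
    exists k : R -> X,
      (forall t, qZbar q t -> (fun n => h (t * q ^ (s n))) @ \oo --> k t) /\
      (forall t, qZbar q t -> (fun n => k (t * q ^ (- s n))) @ \oo --> h t).

Definition almost_automorphic_t {R : realType} {X : normedModType R}
  (q : R) (f : R -> X -> X) : Prop :=
  {within qZbar q `*` [set: X], continuous (fun p : R * X => f p.1 p.2)} /\
  forall s' : nat -> int, exists s : nat -> int, subseq_of s s' /\
    exists g : R -> X -> X,
      (forall t x, qZbar q t -> (fun n => f (t * q ^ (s n)) x) @ \oo --> g t x) /\
      (forall t x, qZbar q t -> (fun n => g (t * q ^ (- s n)) x) @ \oo --> f t x).

From HB Require Import structures.
From mathcomp Require Import all_boot all_order all_algebra.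
From mathcomp Require Import all_classical all_reals all_analysis.
Import Order.TTheory GRing.Theory Num.Theory.
Import numFieldNormedType.Exports.
Local Open Scope classical_set_scope.
Local Open Scope ring_scope.

(* Continuity of t |-> f (t, phi t) needs only the joint continuity of f.  For
   the sequence condition, extract a subsequence for phi with limit k, then a
   further one for f along it with limit g, and take t |-> g t (k t).  The
   Lipschitz bound passes from the f (t q^s_n) to their pointwise limits g t,
   and for a uniformly Lipschitz family, G_n c --> a and c_n --> c give
   G_n c_n --> a; this yields both limits required by the definition. *)

Lemma qZbar_mulr_exp {R : realType} (q : R) (k : int) (t : R) :
  q != 0 -> qZbar q t -> qZbar q (t * q ^ k).
Proof.
move=> q0 [->|[m ->]]; first by left; rewrite mul0r.
by right; exists (m + k); rewrite exprzDr // unitfE.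
Qed.

Lemma subseq_of_trans (s2 s1 s : nat -> int) :
  subseq_of s2 s1 -> subseq_of s1 s -> subseq_of s2 s.
Proof.
move=> [p2 [p2_incr s2E]] [p1 [p1_incr s1E]].
exists (p1 \o p2); split=> [m n mn|n] /=; first exact/p1_incr/p2_incr.
by rewrite s2E s1E.
Qed.

Lemma subseq_of_cvg {T : topologicalType} (u : int -> T) {s2 s1 : nat -> int}
    {l : T} :
  subseq_of s2 s1 ->
  u (s1 n) @[n --> \oo] --> l -> u (s2 n) @[n --> \oo] --> l.
Proof.
move=> [p [p_incr s2E]] us1_l.
have p_infl n : (n <= p n)%N.
  by elim: n => // n IHn; exact: leq_ltn_trans IHn (p_incr _ _ (ltnSn n)).
have p_cvg : p @ \oo --> \oo.
  move=> P [N _ NP]; exists N => // n /= Nn.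
  exact/NP/(leq_trans Nn (p_infl n)).
have -> : (fun n => u (s2 n)) = (fun n => u (s1 n)) \o p.
  by apply: funext => n /=; rewrite s2E.
exact: cvg_comp p_cvg us1_l.
Qed.

Lemma within_continuous_comp_pair {T U V : topologicalType} (A : set T)
    (f : T * U -> V) (h : T -> U) :
  {within A `*` [set: U], continuous f} -> {within A, continuous h} ->
  {within A, continuous (fun t => f (t, h t))}.
Proof.
move=> /subspace_continuousP f_cont /subspace_continuousP h_cont.
apply/subspace_continuousP => x Ax.
suff pair_cvg : (fun t => (t, h t)) @ within A (nbhs x) -->
    within (A `*` [set: U]) (nbhs (x, h x)).
  exact: cvg_comp pair_cvg (f_cont (x, h x) (conj Ax I)).
move=> P [[P1 P2] /= [P1x P2hx] P12P].
apply: filterS2 P1x (h_cont x Ax _ P2hx) => t P1t P2ht At.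
by apply: P12P; split => //; exact: P2ht.
Qed.

Lemma cvg_lipschitz_app {R : realFieldType} {U V : normedModType R} {T : Type}
    {F : set_system T} {FF : Filter F} (G : T -> U -> V) (u : T -> U)
    (c : U) (a : V) (L : R) :
  (\forall n \near F, forall x y, `|G n x - G n y| <= L * `|x - y|) ->
  (fun n => G n c) @ F --> a -> u @ F --> c -> (fun n => G n (u n)) @ F --> a.
Proof.
move=> G_lip Gc_a u_c; apply: cvg_sub0 Gc_a; apply: norm_cvg0.
have Lu_0 : (fun n => L * `|u n - c|) @ F --> (0 : R).
  rewrite -(mulr0 L) -(normr0 U); apply: cvgM; first exact: cvg_cst.
  by apply: cvg_norm; apply/subr_cvg0.
apply: (squeeze_cvgr _ (cvg_cst 0) Lu_0).
by apply: filterS G_lip => n Gn_lip; rewrite normr_ge0 Gn_lip.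
Qed.

Lemma lipschitz_cvg {R : realFieldType} {U V : normedModType R} {T : Type}
    {F : set_system T} {FF : ProperFilter F} (G : T -> U -> V) (g : U -> V)
    (L : R) :
  (\forall n \near F, forall x y, `|G n x - G n y| <= L * `|x - y|) ->
  (forall x, (fun n => G n x) @ F --> g x) ->
  forall x y, `|g x - g y| <= L * `|x - y|.
Proof.
move=> G_lip G_g x y.
have Gxy : `|G n x - G n y| @[n --> F] --> `|g x - g y|.
  by apply: cvg_norm; apply: cvgB.
apply: (closed_cvg _ (@closed_le R (L * `|x - y|)) _ _ Gxy).
by apply: filterS G_lip => n; apply.
Qed.

Theorem theorem3p10 (R : realType) (X : completeNormedModType R) (q : R)
  (hq : 1 < q) (f : R -> X -> X) (phi : R -> X) :
  almost_automorphic_t q f ->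
  (exists L : R, 0 < L /\
     forall t (x y : X), qZbar q t -> `|f t x - f t y| <= L * `|x - y|) ->
  almost_automorphic q phi ->
  almost_automorphic q (fun t => f t (phi t)).
Proof.
move=> [f_cont f_aa] [L [_ f_lip]] [phi_cont phi_aa].
split; first exact: (within_continuous_comp_pair _ _ _ f_cont phi_cont).
move=> s'; have [s1 [s1s' [k [phi_k k_phi]]]] := phi_aa s'.
have [s [ss1 [g [f_g g_f]]]] := f_aa s1.
exists s; split; first exact: subseq_of_trans ss1 s1s'.
have qZ_shift t (m : int) : qZbar q t -> qZbar q (t * q ^ m).
  by apply: qZbar_mulr_exp; rewrite gt_eqF // (lt_trans ltr01 hq).
have g_lip t : qZbar q t -> forall x y, `|g t x - g t y| <= L * `|x - y|.
  move=> qt; apply: lipschitz_cvg (f_g t ^~ qt).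
  by apply: filterE => n x y; apply: f_lip; apply: qZ_shift.
exists (fun t => g t (k t)); split => t qt.
- apply: (cvg_lipschitz_app (fun n => f (t * q ^ s n))
    (fun n => phi (t * q ^ s n)) (k t) _ L).
  + by apply: filterE => n x y; apply: f_lip; apply: qZ_shift.
  + exact: f_g.
  + exact: (subseq_of_cvg (fun m => phi (t * q ^ m)) ss1 (phi_k t qt)).
- apply: (cvg_lipschitz_app (fun n => g (t * q ^ (- s n)))
    (fun n => k (t * q ^ (- s n))) (phi t) _ L).
  + by apply: filterE => n x y; apply: g_lip; apply: qZ_shift.
  + exact: g_f.
  + exact: (subseq_of_cvg (fun m => k (t * q ^ (- m))) ss1 (k_phi t qt)).
Qed.
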